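(* Let $N\ge 1$ be an integer, let $\gamma>0$, $\upsilon\in(0,1]$, $P_b>0$, $h>0$, $T>0$, and let $p_1>p_2>\cdots>p_N>0$ with $p_1\le 1$. Consider Problem P1: minimize $\sum_{k=1}^N \gamma p_k f_k^2$ over $(f_1,\dots,f_N)$ subject to $\sum_{k=1}^m \gamma f_k^2 \le \upsilon P_b h \sum_{k=1}^m \frac{1}{f_k}$ for $m=1,\dots,N$, $\sum_{k=1}^N \frac{1}{f_k}\le T$, and $f_k>0$ for all $k$; Problem P2: minimize $\sum_{k=1}^N \gamma p_k f_k^2$ over $(f_1,\dots,f_N,y_1,\dots,y_N)$ subject to $\sum_{k=1}^m \gamma f_k^2 \le \upsilon P_b h \sum_{k=1}^m y_k$ for $m=1,\dots,N$, $\sum_{k=1}^N y_k\le T$, and $f_k>0$, $\frac{1}{f_k}-y_k\le 0$ for all $k$. Then the solution of Problem P2 also solves Problem P1: if $(\{f_k^*\},\{y_k^*\})$ is an optimal solution of P2, then $y_k^*=1/f_k^*$ for all $k$ and $(f_1^*,\dots,f_N^* )$ is an optimal solution of P1.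
   Context: Model: $f_k$ is the CPU frequency of the $k$-th CPU cycle of a mobile device, $p_k$ is the probability that the $k$-th cycle is executed (the sequence is decreasing in $k$), $\gamma f^2$ is the energy consumed by one cycle at frequency $f$, $\upsilon P_b h$ is the harvested power, and $T$ is the deadline. P2 is obtained from P1 by substituting $y_k=1/f_k$ and relaxing $y_kf_k=1$ to $y_kf_k\ge 1$. *)

From mathcomp Require Import all_boot all_order all_algebra.
From mathcomp Require Import reals.
Set Implicit Arguments. Unset Strict Implicit. Unset Printing Implicit Defensive.
Import Order.TTheory GRing.Theory Num.Theory.
Local Open Scope ring_scope.

Section P.
Variables (R : realType) (N : nat) (gamma upsilon Pb h T : R) (p : 'I_N -> R).

Definition obj (f : 'I_N -> R) : R := \sum_(k < N) gamma * p k * f k ^+ 2.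

(* feasibility for P1; the prefix constraints are indexed by m = 1..N,
   i.e. sums over k with (k < m)%N *)
Definition feasible1 (f : 'I_N -> R) : Prop :=
  (forall k, 0 < f k) /\
  (forall m : nat, (1 <= m <= N)%N ->
     \sum_(k < N | (k < m)%N) gamma * f k ^+ 2
       <= upsilon * Pb * h * \sum_(k < N | (k < m)%N) (f k)^-1) /\
  \sum_(k < N) (f k)^-1 <= T.

Definition optimal1 (f : 'I_N -> R) : Prop :=
  feasible1 f /\ forall g, feasible1 g -> obj f <= obj g.

Definition feasible2 (f y : 'I_N -> R) : Prop :=
  (forall k, 0 < f k) /\
  (forall k, (f k)^-1 - y k <= 0) /\
  (forall m : nat, (1 <= m <= N)%N ->
     \sum_(k < N | (k < m)%N) gamma * f k ^+ 2
       <= upsilon * Pb * h * \sum_(k < N | (k < m)%N) y k) /\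
  \sum_(k < N) y k <= T.

Definition optimal2 (f y : 'I_N -> R) : Prop :=
  feasible2 f y /\ forall g z, feasible2 g z -> obj f <= obj g.

End P.

(* An optimal solution of P2 must satisfy y_k = 1/f_k: if y_k > 1/f_k for some k,
   lowering f_k to 1/y_k keeps every constraint of P2 (the left-hand sides of the
   energy constraints only decrease) and strictly lowers the objective because
   gamma p_k > 0.  With y_k = 1/f_k the constraints of P2 are those of P1, and
   every P1-feasible g yields the P2-feasible pair (g, 1/g), so f is optimal for P1. *)
From mathcomp Require Import all_boot all_order all_algebra.
From mathcomp Require Import reals.
Set Implicit Arguments. Unset Strict Implicit. Unset Printing Implicit Defensive.
Import Order.TTheory GRing.Theory Num.Theory.
Local Open Scope ring_scope.

Section Relaxation.
Variables (R : realType) (N : nat) (gamma upsilon Pb h T : R) (p : 'I_N -> R).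
Hypothesis gamma_gt0 : 0 < gamma.
Hypothesis p_gt0 : forall k, 0 < p k.

Lemma feasible2_inv (g : 'I_N -> R) :
  feasible1 gamma upsilon Pb h T g ->
  feasible2 gamma upsilon Pb h T g (fun k => (g k)^-1).
Proof. by move=> [g_gt0 [energy deadline]]; split=> //; split=> // k; rewrite subrr. Qed.

Lemma feasible1_tight (f y : 'I_N -> R) :
  feasible2 gamma upsilon Pb h T f y -> (forall k, y k = (f k)^-1) ->
  feasible1 gamma upsilon Pb h T f.
Proof.
move=> [f_gt0 [_ [energy deadline]]] yE.
have sumE (P : pred 'I_N) : \sum_(k < N | P k) y k = \sum_(k < N | P k) (f k)^-1.
  exact: eq_bigr.
by split=> //; split=> [m m_range|]; rewrite -sumE //; apply: energy.
Qed.

Lemma feasible2_shrink (f g y : 'I_N -> R) :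
  (forall k, 0 < g k <= f k) -> (forall k, (g k)^-1 <= y k) ->
  feasible2 gamma upsilon Pb h T f y -> feasible2 gamma upsilon Pb h T g y.
Proof.
move=> gf gy [_ [_ [energy deadline]]].
split=> [k|]; first by case/andP: (gf k).
split=> [k|]; first by rewrite subr_le0.
split=> // m m_range.
apply: le_trans (energy m m_range); apply: ler_sum => k _.
have /andP[g_gt0 g_le] := gf k; have f_gt0 := lt_le_trans g_gt0 g_le.
by rewrite ler_wpM2l ?(ltW gamma_gt0) // (lerXn2r _ (ltW g_gt0) (ltW f_gt0) g_le).
Qed.

Lemma obj_lt (f g : 'I_N -> R) (k : 'I_N) :
  (forall i, 0 < g i <= f i) -> g k < f k -> obj gamma p g < obj gamma p f.
Proof.
move=> gf gf_k; have weight_gt0 i : 0 < gamma * p i by rewrite mulr_gt0.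
have g_ge0 i : 0 <= g i by case/andP: (gf i) => /ltW.
have f_ge0 i : 0 <= f i by case/andP: (gf i) => /ltW g_gt0 /(le_trans g_gt0).
rewrite /obj (bigD1 k) //= [X in _ < X](bigD1 k) //=; apply: ltr_leD.
  by rewrite ltr_pM2l // ltrXn2r ?nnegrE.
apply: ler_sum => i _; case/andP: (gf i) => _ g_le.
by rewrite ler_pM2l // (lerXn2r _ (g_ge0 i) (f_ge0 i) g_le).
Qed.

Lemma optimal2_tight (f y : 'I_N -> R) :
  optimal2 gamma upsilon Pb h T p f y -> forall k, y k = (f k)^-1.
Proof.
move=> [feas opt] k; have [f_gt0 [fy _]] := feas.
apply/eqP; rewrite eq_le -[_ <= y k]subr_le0 fy andbT leNgt; apply/negP => y_gt.
have y_gt0 : 0 < y k by apply: lt_trans y_gt; rewrite invr_gt0.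
have yf : (y k)^-1 < f k by rewrite -[f k]invrK ltf_pV2 ?posrE ?invr_gt0.
pose g i := if i == k then (y k)^-1 else f i.
have g_lt : g k < f k by rewrite /g eqxx.
have gf i : 0 < g i <= f i.
  rewrite /g; have [->|_] := eqVneq i k; last by rewrite f_gt0 lexx.
  by rewrite invr_gt0 y_gt0 ltW.
have gy i : (g i)^-1 <= y i.
  rewrite /g; have [->|_] := eqVneq i k; first by rewrite invrK.
  by rewrite -subr_le0.
have := opt _ _ (feasible2_shrink gf gy feas).
by rewrite leNgt (obj_lt gf g_lt).
Qed.

End Relaxation.

Theorem lemma1 (R : realType) (N : nat) (gamma upsilon Pb h T : R)
  (p : 'I_N -> R)
  (HN : (1 <= N)%N) (Hgamma : 0 < gamma) (Hups0 : 0 < upsilon)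
  (Hups1 : upsilon <= 1) (HPb : 0 < Pb) (Hh : 0 < h) (HT : 0 < T)
  (Hpdec : forall i j : 'I_N, (i < j)%N -> p j < p i)
  (Hppos : forall k : 'I_N, 0 < p k)
  (Hp1 : forall k : 'I_N, nat_of_ord k = 0%N -> p k <= 1)
  (fs ys : 'I_N -> R) :
  optimal2 gamma upsilon Pb h T p fs ys ->
  (forall k, ys k = (fs k)^-1) /\ optimal1 gamma upsilon Pb h T p fs.
Proof.
move=> opt2; have tight := optimal2_tight Hgamma Hppos opt2.
split=> //; case: opt2 => feas opt; split; first exact: feasible1_tight feas tight.
by move=> g /feasible2_inv; apply: opt.
Qed.
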